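(* Let $\bm{f}(\bm{y})=A\bm{y}+\bm{g}(\bm{y})$ with $A\in\mathbb{R}^{n\times n}$ and $\bm{g}:\mathbb{R}^n\to\mathbb{R}^n$ twice differentiable, fix $\hat{\bm{y}}^n\in\mathbb{R}^n$, and let $u\in(0,1]$ be a roundoff unit. For $\Delta t>0$ let $\hat{\bm{d}}_j\in\mathbb{R}^n$ satisfy $\|\hat{\bm{d}}_j\|_2\le C\Delta t$, set $\delta=\sqrt{u}/\Delta t$, and define $$\hat\Delta\bm{f}_j=\hat A\hat{\bm{d}}_j+\delta^{-1}\big(\hat{\bm{g}}(\hat{\bm{y}}^n+\delta\hat{\bm{d}}_j)-\bm{g}(\hat{\bm{y}}^n)\big),$$ where $\hat A\hat{\bm{d}}_j=(A+\Delta A_j)\hat{\bm{d}}_j$ with $\|\Delta A_j\|_2\le Cu\|A\|_2$, and $\hat{\bm{g}}$ is a low-precision evaluation of $\bm{g}$ satisfying $\|\hat{\bm{g}}(\bm{x})-\bm{g}(\bm{x})\|_2\le Cu$. Then $$\hat\Delta\bm{f}_j=\bm{f}(\hat{\bm{y}}^n+\hat{\bm{d}}_j)-\bm{f}(\hat{\bm{y}}^n)+O(\sqrt{u}\,\Delta t+\Delta t^2),$$ with the implied constant independent of $u$ and $\Delta t$.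
   Context: Here $C$ denotes generic positive constants depending only on $\bm{f}$ (not on $u$ or $\Delta t$). High-precision evaluations (such as $\bm{g}(\hat{\bm{y}}^n)$) are assumed exact; low-precision operations are modeled by the stated perturbations. *)

From HB Require Import structures.
From mathcomp Require Import all_boot all_order all_algebra.
From mathcomp Require Import all_classical all_reals all_analysis.
Set Implicit Arguments. Unset Strict Implicit. Unset Printing Implicit Defensive.
Import Order.TTheory GRing.Theory Num.Theory.
Import numFieldNormedType.Exports.
Local Open Scope classical_set_scope.
Local Open Scope ring_scope.

Definition norm2 (R : realType) (n : nat) (v : 'cV[R]_n) : R :=
  Num.sqrt (\sum_(i < n) (v i ord0) ^+ 2).

Definition opnorm2 (R : realType) (n : nat) (M : 'M[R]_n) : R :=
  sup [set norm2 (M *m x) | x in [set x : 'cV[R]_n | norm2 x <= 1]].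

(* g : R^n -> R^n is twice (Frechet) differentiable everywhere: g is
   differentiable, and the derivative x |-> Dg(x) is differentiable; in finite
   dimension the latter is written columnwise: x |-> Dg(x) v is differentiable
   for every direction v. *)
Definition twice_differentiable (R : realType) (n : nat)
  (g : 'cV[R]_n -> 'cV[R]_n) : Prop :=
  (forall x, differentiable g x) /\
  (forall v : 'cV[R]_n, forall x, differentiable (fun y => 'd g y v) x).

From HB Require Import structures.
From mathcomp Require Import all_boot all_order all_algebra.
From mathcomp Require Import all_classical all_reals all_analysis.
From mathcomp Require Import ring.
Import Order.TTheory GRing.Theory Num.Theory.
Import numFieldNormedType.Exports.
Local Open Scope classical_set_scope.
Local Open Scope ring_scope.

Set Implicit Arguments. Unset Strict Implicit.

(* With R(h) := g(y + h) - g(y) - Dg(y) h, twice differentiability gives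
   |R(h)| <= L |h|^2 on bounded sets: near 0 by the mean value theorem and a
   Lipschitz bound on Dg at y, elsewhere by compactness.  Since Dg(y) is
   linear, the linear parts cancel and the error of the scaled difference is
     dA d + delta^-1 (ghat - g)(y + delta d) + delta^-1 R(delta d) - R(d).
   With |d| <= C dt and delta dt = sqrt u these terms are O(u dt), O(sqrt u dt),
   O(sqrt u dt) and O(dt^2).  The estimates use the entrywise max norm of the
   normed-module structure on matrices, which is within a factor n of norm2. *)

Section mx_norm_bounds.
Variable R : realDomainType.

Lemma mx_entry_norm_le m p (x : 'M[R]_(m, p)) i j : `|x i j| <= `|x|.
Proof.
rewrite -[`|x|]/(mx_norm x) mx_normrE.
exact: le_trans (le_bigmax _ _ (i, j)).
Qed.

Lemma mx_norm_le m p (x : 'M[R]_(m, p)) a :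
  0 <= a -> (forall i j, `|x i j| <= a) -> `|x| <= a.
Proof.
move=> a_ge0 xa; rewrite -[`|x|]/(mx_norm x) mx_normrE.
by apply: bigmax_le => // -[i j] _; apply: xa.
Qed.

Lemma mx_normtr m p (x : 'M[R]_(m, p)) : `|x^T| = `|x|.
Proof.
apply/eqP; rewrite eq_le; apply/andP; split; apply: mx_norm_le => // i j.
  by rewrite mxE mx_entry_norm_le.
by have := mx_entry_norm_le x^T j i; rewrite mxE.
Qed.

Lemma mulmx_norm_le m p q (M : 'M[R]_(m, p)) (x : 'M[R]_(p, q)) :
  `|M *m x| <= p%:R * `|M| * `|x|.
Proof.
apply: mx_norm_le => [|i j]; first by rewrite !mulr_ge0.
rewrite mxE (le_trans (ler_norm_sum _ _ _)) //.
apply: le_trans (_ : \sum_(k < p) `|M| * `|x| <= _); last first.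
  by rewrite sumr_const card_ord -mulrA mulr_natl.
by apply: ler_sum => k _; rewrite normrM ler_pM // mx_entry_norm_le.
Qed.

End mx_norm_bounds.

Lemma continuous_trmx (R : realFieldType) m p : continuous (@trmx R m p).
Proof.
move=> x; apply/(@cvgrPdist_lt _ _ _ (nbhs x)) => e e_gt0; near=> z.
rewrite -linearB /= mx_normtr; near: z.
exact: cvgr_dist_lt.
Unshelve. all: by end_near. Qed.

Section euclidean_norm.
Variable R : realType.

Lemma norm2_ge0 n (v : 'cV[R]_n) : 0 <= norm2 v.
Proof. exact: sqrtr_ge0. Qed.

Lemma norm2Z n c (v : 'cV[R]_n) : norm2 (c *: v) = `|c| * norm2 v.
Proof.
rewrite /norm2 -sqrtr_sqr -sqrtrM ?sqr_ge0 //; congr Num.sqrt.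
by rewrite mulr_sumr; apply: eq_bigr => i _; rewrite mxE exprMn.
Qed.

Lemma norm2_0 n : norm2 (0 : 'cV[R]_n) = 0.
Proof. by rewrite -(scale0r (0 : 'cV[R]_n)) norm2Z normr0 mul0r. Qed.

Lemma mx_norm_le_norm2 n (v : 'cV[R]_n) : `|v| <= norm2 v.
Proof.
apply: mx_norm_le (norm2_ge0 v) _ => i j.
rewrite (ord1 j) -sqrtr_sqr ler_wsqrtr // (bigD1 i) //= lerDl.
by apply: sumr_ge0 => k _; apply: sqr_ge0.
Qed.

Lemma norm2_eq0 n (v : 'cV[R]_n) : norm2 v = 0 -> v = 0.
Proof.
move=> v0; apply: normr0_eq0; apply/eqP; rewrite eq_le normr_ge0 andbT.
by rewrite -v0 mx_norm_le_norm2.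
Qed.

Lemma norm2_le_mx_norm n (v : 'cV[R]_n) : norm2 v <= n%:R * `|v|.
Proof.
have nv_ge0 : 0 <= n%:R * `|v| by rewrite mulr_ge0.
rewrite /norm2 -(ger0_norm nv_ge0) -sqrtr_sqr ler_wsqrtr //.
apply: le_trans (_ : \sum_(i < n) `|v| ^+ 2 <= _).
  apply: ler_sum => i _; rewrite -real_normK ?num_real //.
  by rewrite lerXn2r ?nnegrE // mx_entry_norm_le.
rewrite sumr_const card_ord exprMn -[leLHS]mulr_natl ler_wpM2r ?sqr_ge0 //.
by rewrite -natrX ler_nat; case: n {v nv_ge0} => // k; rewrite leq_pmull.
Qed.

End euclidean_norm.

Section operator_norm.
Variables (R : realType) (n : nat).
Implicit Types (M : 'M[R]_n) (x : 'cV[R]_n).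

Lemma opnorm2_has_ubound M :
  has_ubound [set norm2 (M *m x) | x in [set x : 'cV[R]_n | norm2 x <= 1]].
Proof.
exists (n%:R * (n%:R * `|M|)) => _ [x /= x_le1 <-].
apply: le_trans (norm2_le_mx_norm _) _; rewrite ler_wpM2l //.
apply: le_trans (mulmx_norm_le _ _) _; rewrite ler_piMr ?mulr_ge0 //.
exact: le_trans (mx_norm_le_norm2 _) x_le1.
Qed.

Lemma opnorm2_ub M x : norm2 x <= 1 -> norm2 (M *m x) <= opnorm2 M.
Proof. by move=> x_le1; apply: (ub_le_sup (opnorm2_has_ubound M)); exists x. Qed.

Lemma opnorm2_ge0 M : 0 <= opnorm2 M.
Proof.
by have := opnorm2_ub M (x := 0); rewrite mulmx0 norm2_0; apply; rewrite ler01.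
Qed.

Lemma opnorm2_mulmx_le M x : norm2 (M *m x) <= opnorm2 M * norm2 x.
Proof.
have [/norm2_eq0 ->|x_neq0] := eqVneq (norm2 x) 0.
  by rewrite mulmx0 !norm2_0 mulr0.
have x_gt0 : 0 < norm2 x by rewrite lt_def x_neq0 norm2_ge0.
have := opnorm2_ub M (x := (norm2 x)^-1 *: x).
rewrite -scalemxAr !norm2Z ger0_norm ?invr_ge0 ?norm2_ge0 // mulVf //.
by move=> /(_ (lexx _)); rewrite ler_pdivrMl // mulrC.
Qed.

End operator_norm.

Section differential_bounds.
Variable R : realType.

Lemma differentiable_lipschitz_at (V W : normedModType R) (F : V -> W) x :
  differentiable F x ->
  exists2 c, 0 < c & \forall k \near 0, `|F (x + k) - F x| <= c * `|k|.
Proof.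
move=> dF; have [c c_gt0 dFc] := linear_lipschitz (diff_continuous dF).
have /eqaddoP small_o := diff_locally dF.
exists (c + 1); first by rewrite addr_gt0.
near=> k.
have : `|F (k + x) - (F x + 'd F x k)| <= 1 * `|k|.
  by near: k; exact: small_o.
rewrite mul1r [k + x]addrC => o_k.
have -> : F (x + k) - F x = F (x + k) - (F x + 'd F x k) + 'd F x k.
  by rewrite opprD addrA subrK.
by rewrite mulrDl mul1r addrC (le_trans (ler_normD _ _)) // lerD.
Unshelve. all: by end_near. Qed.

Lemma linear_sub_mx_norm_le m p (W : normedModType R)
    (f1 f2 : {linear 'M[R]_(m, p) -> W}) a v :
  (forall i j, `|f1 (delta_mx i j) - f2 (delta_mx i j)| <= a) ->
  `|f1 v - f2 v| <= (m * p)%:R * a * `|v|.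
Proof.
move=> f12a.
have -> : f1 v - f2 v =
    \sum_i \sum_j v i j *: (f1 (delta_mx i j) - f2 (delta_mx i j)).
  rewrite {1 2}(matrix_sum_delta v) [f1 _]linear_sum [f2 _]linear_sum -sumrB.
  apply: eq_bigr => i _.
  rewrite [f1 _]linear_sum [f2 _]linear_sum -sumrB; apply: eq_bigr => j _.
  by rewrite [f1 _]linearZ [f2 _]linearZ scalerBr.
apply: le_trans (ler_norm_sum _ _ _) _.
apply: le_trans (_ : \sum_(i < m) \sum_(j < p) `|v| * a <= _).
  apply: ler_sum => i _; apply: le_trans (ler_norm_sum _ _ _) _.
  by apply: ler_sum => j _; rewrite normrZ ler_pM // mx_entry_norm_le.
by rewrite !sumr_const !card_ord -mulrnA -[leLHS]mulr_natl mulnC [`|v| * a]mulrC mulrA.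
Qed.

Lemma diff_lipschitz_at n (W : normedModType R) (g : 'cV[R]_n -> W) y :
  (forall v x, differentiable (fun z => 'd g z v) x) ->
  exists2 r, 0 < r & exists2 L, 0 <= L &
    forall k v, `|k| < r -> `|'d g (y + k) v - 'd g y v| <= L * `|k| * `|v|.
Proof.
move=> d2g.
have /choice[c cP] (e : 'I_n * 'I_1) : exists c, 0 < c /\ \forall k \near 0,
    `|'d g (y + k) (delta_mx e.1 e.2) - 'd g y (delta_mx e.1 e.2)| <= c * `|k|.
  by have [c c_gt0 ?] := differentiable_lipschitz_at (d2g (delta_mx e.1 e.2) y); exists c.
pose L := \sum_e c e.
have c_le_L e : c e <= L.
  by rewrite /L (bigD1 e) //= lerDl sumr_ge0 // => e' _; apply: ltW (cP e').1.
have /nbhs_norm0P[r r_gt0 rP] : \forall k \near 0, forall e : 'I_n * 'I_1,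
    `|'d g (y + k) (delta_mx e.1 e.2) - 'd g y (delta_mx e.1 e.2)| <= L * `|k|.
  near=> k => e; apply: le_trans (_ : c e * `|k| <= _).
    by move: e; near: k; apply: filter_forall => e; exact: (cP e).2.
  by rewrite ler_wpM2r // c_le_L.
exists r => //; exists ((n * 1)%:R * L).
  by rewrite mulr_ge0 // sumr_ge0 // => e _; apply: ltW (cP e).1.
move=> k v k_lt_r; rewrite -[(n * 1)%:R * L * _]mulrA.
apply: linear_sub_mx_norm_le => i j.
exact: (rP k k_lt_r (i, j)).
Unshelve. all: by end_near. Qed.

Lemma differentiable_is_derive (V W : normedModType R) (f : V -> W) x v :
  differentiable f x -> is_derive x v f ('d f x v).
Proof. by move=> df; apply: DeriveDef; [exact: diff_derivable | exact: deriveE]. Qed.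

Lemma is_derive_scalel (W : normedModType R) (w : W) (t : R) :
  is_derive t 1 (fun s : R => s *: w) w.
Proof.
have dw : differentiable (fun s : R => s *: w) t by [].
by have := differentiable_is_derive (1 : R) dw; rewrite diff_val scale1r.
Qed.

Lemma is_derive_along_line (V W : normedModType R) (g : V -> W) y h t :
  differentiable g (y + t *: h) ->
  is_derive t 1 (fun s => g (y + s *: h)) ('d g (y + t *: h) h).
Proof.
move=> dg.
have line : is_diff t (fun s : R => y + s *: h) ( *:%R^~ h).
  by rewrite -[( *:%R^~ h)]add0r; exact: is_diffD.
have dgl : differentiable (g \o (fun s => y + s *: h)) t.
  exact: differentiable_comp.
have line1 : 'd (fun s : R => y + s *: h) t 1 = h by rewrite diff_val scale1r.
by have := differentiable_is_derive (1 : R) dgl; rewrite diff_comp // /= line1.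
Qed.

Lemma mx_mean_value_le m p (f df : R -> 'M[R]_(m, p)) (a b M : R) :
  a <= b -> (forall t : R, is_derive t 1 f (df t)) ->
  (forall t, a <= t <= b -> `|df t| <= M) ->
  `|f b - f a| <= M * (b - a).
Proof.
move=> a_le_b f' df_le.
have M_ge0 : 0 <= M by apply: le_trans (df_le a _); rewrite ?lexx.
apply: mx_norm_le => [|i j]; first by rewrite mulr_ge0 // subr_ge0.
have coord_f' (t : R) : is_derive t 1 (fun s => f s i j) (df t i j).
  have f_derivable := @ex_derive _ _ _ _ _ _ _ (f' t).
  have /derivable_mxP/(_ i j) coord_derivable := f_derivable.
  apply: DeriveDef => //.
  by rewrite -(@derive_val _ _ _ _ _ _ _ (f' t)) derive_mx // mxE.
have cont : {within `[a, b], continuous (fun s => f s i j)}.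
  by apply: derivable_within_continuous => t _; exact: ex_derive.
have [c /itvP c_ab] := MVT_segment a_le_b (fun t _ => coord_f' t) cont.
rewrite !mxE => ->; rewrite normrM (ger0_norm (_ : 0 <= b - a)) ?subr_ge0 //.
by rewrite ler_wpM2r ?subr_ge0 // (le_trans (mx_entry_norm_le _ _ _)) // df_le ?c_ab.
Qed.

Definition taylor_rem (V W : normedModType R) (g : V -> W) y h :=
  g (y + h) - g y - 'd g y h.

Lemma continuous_taylor_rem (V W : normedModType R) (g : V -> W) y :
  (forall x, differentiable g x) -> continuous (taylor_rem g y).
Proof.
move=> dg h.
have shift_y : {for h, continuous (fun h => y + h)}.
  exact: continuousD (@cst_continuous _ _ y h) (@cvg_id _ (nbhs h)).
have g_shift : {for h, continuous (fun h => g (y + h))}.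
  exact: continuous_comp shift_y (differentiable_continuous (dg (y + h))).
have Dg : {for h, continuous ('d g y)} by exact: diff_continuous.
exact: continuousB (continuousB g_shift (@cst_continuous _ _ (g y) h)) Dg.
Qed.

Lemma taylor_rem_local n (g : 'cV[R]_n -> 'cV[R]_n) y :
  twice_differentiable g ->
  exists2 r, 0 < r & exists2 L, 0 <= L &
    forall h, `|h| < r -> `|taylor_rem g y h| <= L * `|h| ^+ 2.
Proof.
move=> [dg d2g]; have [r r_gt0 [L L_ge0 Dg_lip]] := diff_lipschitz_at y d2g.
exists r => //; exists L => // h h_lt_r.
pose psi s := g (y + s *: h) - s *: 'd g y h.
have psi' (t : R) : is_derive t 1 psi ('d g (y + t *: h) h - 'd g y h).
  exact: is_deriveB (is_derive_along_line _) (is_derive_scalel _ _).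
have -> : taylor_rem g y h = psi 1 - psi 0.
  by rewrite /psi /taylor_rem /= !scale1r !scale0r addr0 subr0 addrAC.
rewrite -[L * _]mulr1 -[X in _ <= _ * X](subr0 1).
apply: mx_mean_value_le ler01 psi' _ => t /andP[t_ge0 t_le1].
have th_le_h : `|t *: h| <= `|h|.
  by rewrite normrZ ger0_norm // ler_piMl.
apply: le_trans (Dg_lip _ _ (le_lt_trans th_le_h h_lt_r)) _.
by rewrite expr2 mulrA ler_wpM2r // ler_wpM2l.
Qed.

Lemma continuous_cV_bounded_ball n (W : normedModType R) (F : 'cV[R]_n -> W) r :
  continuous F -> exists M, forall h, `|h| <= r -> `|F h| <= M.
Proof.
move=> F_cont.
pose B := [set v : 'rV[R]_n | `|v| <= r].
have B_bounded : [bounded v | v in B].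
  rewrite /bounded_near; near=> M => v /= v_le.
  by apply: le_trans v_le _; near: M; apply: nbhs_pinfty_ge; exact: num_real.
have B_closed : closed B.
  by apply: preimage_closed (@closed_le _ r) => v _; exact: norm_continuous.
have FT_cont : continuous (F \o trmx).
  by move=> v; exact: (continuous_comp (@continuous_trmx _ _ _ v) (F_cont _)).
have := continuous_compact (continuous_subspaceT FT_cont)
  (bounded_closed_compact B_bounded B_closed).
move=> /compact_bounded[M [_ M_bound]]; exists (M + 1) => h h_le.
apply: (M_bound (M + 1)); first by rewrite ltrDl.
by exists h^T; rewrite /B /= ?mx_normtr ?trmxK.
Unshelve. all: by end_near. Qed.

(* Away from the ball where [taylor_rem_local] applies, [`|h|] is bounded below
   and the remainder is bounded above. *)
Lemma taylor_rem_bound n (g : 'cV[R]_n -> 'cV[R]_n) y r :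
  twice_differentiable g ->
  exists2 L, 0 <= L &
    forall h, `|h| <= r -> `|taylor_rem g y h| <= L * `|h| ^+ 2.
Proof.
move=> g2; have [r0 r0_gt0 [L0 L0_ge0 near_bound]] := taylor_rem_local y g2.
have [M ball_bound] := continuous_cV_bounded_ball r (continuous_taylor_rem (y := y) g2.1).
have r0_sqr_gt0 : 0 < r0 ^+ 2 by rewrite exprn_gt0.
exists (L0 + `|M| / r0 ^+ 2); first by rewrite addr_ge0 ?divr_ge0 ?sqr_ge0.
move=> h h_le; have [h_lt|h_ge] := ltP `|h| r0.
  apply: le_trans (near_bound h h_lt) _.
  by rewrite ler_wpM2r ?sqr_ge0 // lerDl divr_ge0 ?sqr_ge0.
apply: le_trans (le_trans (ball_bound h h_le) (ler_norm M)) _.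
apply: le_trans (_ : `|M| / r0 ^+ 2 * `|h| ^+ 2 <= _); last first.
  by rewrite ler_wpM2r ?sqr_ge0 // lerDr.
by rewrite mulrAC ler_pdivlMr // ler_wpM2l // !expr2 ler_pM // ltW.
Qed.

End differential_bounds.

Lemma finite_difference_error_split (R : realType) n (A dA : 'M[R]_n)
    (g ghat : 'cV[R]_n -> 'cV[R]_n) y d delta :
  delta != 0 ->
  (A + dA) *m d + delta^-1 *: (ghat (y + delta *: d) - g y)
    - ((A *m (y + d) + g (y + d)) - (A *m y + g y)) =
  dA *m d + delta^-1 *: (ghat (y + delta *: d) - g (y + delta *: d))
    + delta^-1 *: taylor_rem g y (delta *: d) - taylor_rem g y d.
Proof.
move=> delta_neq0; rewrite /taylor_rem linearZ /= mulmxDl mulmxDr.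
move: (A *m d) (dA *m d) (A *m y) (g y) (g (y + d)) (g (y + delta *: d))
  (ghat (y + delta *: d)) ('d g y d) => Ad dAd Ay gy gyd gydelta ghatydelta Dgd.
by apply/matrixP => i j; rewrite !mxE; field.
Qed.

Section finite_difference_terms.
Variables (R : realType) (n : nat) (C u dt delta : R) (d : 'cV[R]_n).
Hypotheses (C_gt0 : 0 < C) (u_gt0 : 0 < u) (u_le1 : u <= 1).
Hypotheses (dt_gt0 : 0 < dt) (dt_le1 : dt <= 1) (d_le : norm2 d <= C * dt).
Hypothesis delta_def : delta = Num.sqrt u / dt.

Let sqrt_u_gt0 : 0 < Num.sqrt u. Proof. by rewrite sqrtr_gt0. Qed.

Let sqrt_u_le1 : Num.sqrt u <= 1. Proof. by rewrite -sqrtr1 ler_wsqrtr. Qed.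

Let u_le_sqrt_u : u <= Num.sqrt u.
Proof.
have := ler_piMl (sqrtr_ge0 u) sqrt_u_le1.
by rewrite -expr2 sqr_sqrtr // ltW.
Qed.

Let delta_gt0 : 0 < delta. Proof. by rewrite delta_def divr_gt0. Qed.

Let d_mx_norm_le : `|d| <= C * dt.
Proof. exact: le_trans (mx_norm_le_norm2 d) d_le. Qed.

Let scaled_d_norm_le : `|delta *: d| <= delta * (C * dt).
Proof. by rewrite normrZ gtr0_norm // ler_wpM2l // ltW. Qed.

Lemma perturbed_matrix_term_le (A dA : 'M[R]_n) :
  opnorm2 dA <= C * u * opnorm2 A ->
  `|dA *m d| <= C ^+ 2 * opnorm2 A * (Num.sqrt u * dt).
Proof.
move=> dA_le; apply: le_trans (mx_norm_le_norm2 _) _.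
apply: le_trans (opnorm2_mulmx_le dA d) _.
apply: le_trans (ler_pM (opnorm2_ge0 _) (norm2_ge0 _) dA_le d_le) _.
have -> : C * u * opnorm2 A * (C * dt) = C ^+ 2 * opnorm2 A * (u * dt) by ring.
apply: ler_wpM2l; first by rewrite mulr_ge0 ?sqr_ge0 ?opnorm2_ge0.
by rewrite ler_wpM2r // ltW.
Qed.

Lemma low_precision_term_le (e : 'cV[R]_n) :
  norm2 e <= C * u -> `|delta^-1 *: e| <= C * (Num.sqrt u * dt).
Proof.
move=> e_le; rewrite normrZ gtr0_norm ?invr_gt0 //.
have -> : C * (Num.sqrt u * dt) = delta^-1 * (C * Num.sqrt u ^+ 2).
  by rewrite delta_def; field; rewrite !gt_eqF.
rewrite (sqr_sqrtr (ltW u_gt0)) ler_pM2l ?invr_gt0 //.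
exact: le_trans (mx_norm_le_norm2 e) e_le.
Qed.

Lemma scaled_rem_term_le (Rem : 'cV[R]_n -> 'cV[R]_n) L :
  0 <= L -> (forall h, `|h| <= C -> `|Rem h| <= L * `|h| ^+ 2) ->
  `|delta^-1 *: Rem (delta *: d)| <= L * C ^+ 2 * (Num.sqrt u * dt).
Proof.
move=> L_ge0 Rem_le.
have delta_d_le : `|delta *: d| <= C.
  apply: le_trans scaled_d_norm_le _.
  rewrite mulrCA delta_def divfK ?gt_eqF //.
  exact: ler_piMr (ltW C_gt0) sqrt_u_le1.
rewrite normrZ gtr0_norm ?invr_gt0 //.
have -> : L * C ^+ 2 * (Num.sqrt u * dt) =
    delta^-1 * (L * (delta * (C * dt)) ^+ 2).
  by rewrite delta_def; field; rewrite !gt_eqF.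
rewrite ler_pM2l ?invr_gt0 //.
apply: le_trans (Rem_le _ delta_d_le) _.
by rewrite ler_wpM2l // !expr2 ler_pM.
Qed.

Lemma rem_term_le (Rem : 'cV[R]_n -> 'cV[R]_n) L :
  0 <= L -> (forall h, `|h| <= C -> `|Rem h| <= L * `|h| ^+ 2) ->
  `|Rem d| <= L * C ^+ 2 * dt ^+ 2.
Proof.
move=> L_ge0 Rem_le.
have d_le_C : `|d| <= C := le_trans d_mx_norm_le (ler_piMr (ltW C_gt0) dt_le1).
apply: le_trans (Rem_le _ d_le_C) _.
by rewrite -mulrA -exprMn ler_wpM2l // !expr2 ler_pM.
Qed.

End finite_difference_terms.

Unset Implicit Arguments. Set Strict Implicit.

Theorem lemmaA1 (R : realType) (n : nat) (A : 'M[R]_n)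
  (g : 'cV[R]_n -> 'cV[R]_n) (yn : 'cV[R]_n) (C : R) :
  twice_differentiable g ->
  0 < C ->
  let f := fun y : 'cV[R]_n => A *m y + g y in
  exists K : R, exists T : R, 0 < T /\
    forall (u dt : R) (d : 'cV[R]_n) (dA : 'M[R]_n)
           (ghat : 'cV[R]_n -> 'cV[R]_n),
      0 < u -> u <= 1 -> 0 < dt -> dt <= T ->
      norm2 d <= C * dt ->
      opnorm2 dA <= C * u * opnorm2 A ->
      (forall x, norm2 (ghat x - g x) <= C * u) ->
      let delta := Num.sqrt u / dt in
      let Df := (A + dA) *m d + delta^-1 *: (ghat (yn + delta *: d) - g yn) in
      norm2 (Df - (f (yn + d) - f yn)) <= K * (Num.sqrt u * dt + dt ^+ 2).
Proof.
move=> g2 C_gt0 f.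
have [L L_ge0 rem_le] := taylor_rem_bound yn C g2.
exists (n%:R * (C ^+ 2 * opnorm2 A + C + L * C ^+ 2)), 1; split=> //.
move=> u dt d dA ghat u_gt0 u_le1 dt_gt0 dt_le1 d_le dA_le ghat_le; cbv zeta.
have delta_gt0 : 0 < Num.sqrt u / dt by rewrite divr_gt0 ?sqrtr_gt0.
rewrite /f finite_difference_error_split ?gt_eqF //.
apply: le_trans (norm2_le_mx_norm _) _; rewrite -mulrA ler_wpM2l // mulrDr.
apply: le_trans (ler_normB _ _) _; apply: lerD.
  rewrite !mulrDl; apply: le_trans (ler_normD _ _) _; apply: lerD.
    apply: le_trans (ler_normD _ _) _; apply: lerD.
      exact: perturbed_matrix_term_le.
    exact: low_precision_term_le.
  exact: scaled_rem_term_le.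
apply: le_trans (_ : _ <= L * C ^+ 2 * dt ^+ 2) _; first exact: rem_term_le.
by rewrite ler_wpM2r ?sqr_ge0 // lerDr addr_ge0 ?mulr_ge0 ?sqr_ge0 ?opnorm2_ge0 // ltW.
Qed.
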